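(* Let $G$ be a connected graph with vertices $v_1,\dots,v_n$ and let $\{v_i,v_j\}$ be a pair of vertices of order $h$, with associated vector $S=(s_1,\dots,s_n)^t$ (so $M(G)S=hE_{ij}$). Then $s_i=\min\{s_\ell:\ell=1,\dots,n\}$ and $s_j=\max\{s_\ell:\ell=1,\dots,n\}$.
   Context: Graphs are finite, connected, may have multiple edges, no loops. Let $c_{ij}$ ($i\neq j$) be the number of edges joining $v_i,v_j$, $c_{ii}=-\sum_{j\ne i}c_{ij}$, $M(G)=(c_{ij})$, and $E_{ij}=e_i-e_j\in\mathbb{Z}^n$. For an integer $h>0$, the pair $\{v_i,v_j\}$ has order $h$ if there exists $S=(s_1,\dots,s_n)^t\in\mathbb{Z}^n$ with $M(G)S=hE_{ij}$ and $\gcd(s_1-s_n,\dots,s_{n-1}-s_n)=1$; such an $S$ is the associated vector. *)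

From mathcomp Require Import all_boot all_order all_algebra.
Set Implicit Arguments. Unset Strict Implicit. Unset Printing Implicit Defensive.
Import Order.TTheory GRing.Theory Num.Theory.
Local Open Scope ring_scope.

(* A multigraph on vertex set 'I_n.+1 (vertices v_1..v_{n+1} relabelled
   0..n) is given by its edge-multiplicity function c : c u v = number of
   edges joining u and v. *)
Definition is_multigraph n (c : 'I_n.+1 -> 'I_n.+1 -> nat) : Prop :=
  (forall u v, c u v = c v u) /\ (forall u, c u u = 0%N).

Definition adj n (c : 'I_n.+1 -> 'I_n.+1 -> nat) : rel 'I_n.+1 :=
  fun u v => (0 < c u v)%N.

Definition connected_mg n (c : 'I_n.+1 -> 'I_n.+1 -> nat) : Prop :=
  forall u v, connect (adj c) u v.

Definition Mmat n (c : 'I_n.+1 -> 'I_n.+1 -> nat) : 'M[int]_n.+1 :=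
  \matrix_(u, v) (if u == v then - (\sum_(w | w != u) (c u w)%:Z)
                  else (c u v)%:Z).

Definition Evec n (i j : 'I_n.+1) : 'cV[int]_n.+1 :=
  \col_k ((k == i)%:Z - (k == j)%:Z).

Definition gcd_diff n (S : 'cV[int]_n.+1) : int :=
  \big[gcdz/0%Z]_(k : 'I_n.+1 | k != ord_max) (S k 0 - S ord_max 0).

Definition associated_vector n (c : 'I_n.+1 -> 'I_n.+1 -> nat)
    (i j : 'I_n.+1) (h : nat) (S : 'cV[int]_n.+1) : Prop :=
  Mmat c *m S = (h%:Z) *: Evec i j /\ gcd_diff S = 1.

From mathcomp Require Import all_boot all_order all_algebra.
Import Order.TTheory GRing.Theory Num.Theory.
Local Open Scope ring_scope.

(* Row k of M(G) S is the graph Laplacian sum_w c_kw (s_w - s_k), so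
   M(G) S = h E_ij says that S is subharmonic away from v_j and
   superharmonic away from v_i.  At a vertex where S is maximal all terms of
   the Laplacian are <= 0, so subharmonicity forces every neighbour to share
   the maximal value; by connectedness the maximum spreads along a path to
   v_j.  Symmetrically the minimum is attained at v_i. *)

Lemma connect_closed_fwd (T : finType) (e : rel T) (a : pred T) :
  (forall x y, e x y -> a x -> a y) -> forall x y, connect e x y -> a x -> a y.
Proof.
move=> cl_a x _ /connectP[p e_p ->].
by elim: p x e_p => //= y p IHp x /andP[/cl_a a_y /IHp a_last] /a_y.
Qed.

Section MaximumPrinciple.

Context {T : finType} {R : realDomainType} (c : T -> T -> nat).

Definition laplacian (f : T -> R) (x : T) : R :=
  \sum_w (c x w)%:R * (f w - f x).

Lemma laplacianN f x : laplacian (fun w => - f w) x = - laplacian f x.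
Proof.
rewrite /laplacian -sumrN; apply: eq_bigr => w _.
by rewrite -mulrN opprB opprK addrC.
Qed.

Lemma laplacian_ge0_at_max {f x y} :
  (forall w, f w <= f x) -> 0 <= laplacian f x -> (0 < c x y)%N -> f y = f x.
Proof.
move=> max_x lap_ge0 cxy.
have term_ge0 w : true -> 0 <= (c x w)%:R * (f x - f w).
  by rewrite mulr_ge0 ?subr_ge0.
have sum_eq0 : \sum_w (c x w)%:R * (f x - f w) = 0.
  apply/eqP; rewrite eq_le sumr_ge0 // andbT -oppr_ge0 -sumrN.
  by under eq_bigr do rewrite -mulrN opprB.
have /eqP := psumr_eq0P term_ge0 sum_eq0 (i := y) isT.
by rewrite mulf_eq0 pnatr_eq0 eqn0Ngt cxy subr_eq0 => /eqP.
Qed.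

Hypothesis connected_c : forall u v, connect (fun x y => 0 < c x y)%N u v.

Lemma maximum_principle (j : T) (f : T -> R) :
  (forall k, k != j -> 0 <= laplacian f k) -> forall l, f l <= f j.
Proof.
move=> subharmonic.
have [x _ max_x] := @arg_maxP _ _ T j predT f erefl.
suff fx_le : f x <= f j by move=> l; exact: le_trans (max_x l isT) fx_le.
rewrite leNgt; apply/negP => fj_lt.
have top_closed y z : (0 < c y z)%N -> f y == f x -> f z == f x.
  move=> cyz /eqP fy; have yj : y != j.
    by apply: contraTneq fj_lt => <-; rewrite fy ltxx.
  have max_y w : f w <= f y by rewrite fy; exact: max_x.
  by rewrite (laplacian_ge0_at_max max_y (subharmonic y yj) cyz) fy.
have /eqP fj := @connect_closed_fwd _ _ [pred y | f y == f x] top_closed _ _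
  (connected_c x j) (eqxx _).
by rewrite fj ltxx in fj_lt.
Qed.

Lemma minimum_principle (i : T) (f : T -> R) :
  (forall k, k != i -> laplacian f k <= 0) -> forall l, f i <= f l.
Proof.
move=> superharmonic l; rewrite -lerN2.
apply: (maximum_principle i (fun w => - f w)) => k ki.
by rewrite laplacianN oppr_ge0 superharmonic.
Qed.

End MaximumPrinciple.

Lemma Mmat_mulmx_laplacian n (c : 'I_n.+1 -> 'I_n.+1 -> nat)
    (S : 'cV[int]_n.+1) k :
  (Mmat c *m S) k 0 = laplacian c (fun w => S w 0) k.
Proof.
rewrite /laplacian (bigD1 k) //= subrr mulr0 add0r.
rewrite !mxE (bigD1 k) //= mxE eqxx.
under eq_bigr => w /negbTE wk do rewrite mxE eq_sym wk.
under [RHS]eq_bigr => w _ do rewrite mulrBr natz.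
by rewrite sumrB mulNr big_distrl /= addrC.
Qed.

Theorem lemma1p1 (n : nat) (c : 'I_n.+1 -> 'I_n.+1 -> nat)
  (i j : 'I_n.+1) (h : nat) (S : 'cV[int]_n.+1) :
  is_multigraph c -> connected_mg c -> i != j -> (0 < h)%N ->
  associated_vector c i j h S ->
  (forall l : 'I_n.+1, S i 0 <= S l 0) /\ (forall l : 'I_n.+1, S l 0 <= S j 0).
Proof.
move=> _ conn _ _ [MS _].
have lapS k :
    laplacian c (fun w => S w 0) k = h%:Z * ((k == i)%:Z - (k == j)%:Z).
  by rewrite -Mmat_mulmx_laplacian MS !mxE.
split.
- apply: (minimum_principle c conn) => k ki.
  by rewrite lapS (negbTE ki) sub0r mulrN oppr_le0 mulr_ge0.
- apply: (maximum_principle c conn) => k kj.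
  by rewrite lapS (negbTE kj) subr0 mulr_ge0.
Qed.
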